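(* Let $N, M, m \in \mathbb{N}$, $n_1,\dots,n_N\in\mathbb{N}$, let $\vec{A}\in\mathbb{K}^{M\times N}$ with columns $\vec{a}_1,\dots,\vec{a}_N$, and let $\vec{B}_i\in\mathbb{K}^{m\times n_i}$ for $i\in[N]$. Let $\vec{H}$ be the hierarchical measurement operator $$\vec{H}(\vec{x}_1,\dots,\vec{x}_N)=\sum_{i=1}^N \vec{a}_i\otimes(\vec{B}_i\vec{x}_i).$$ Let $s\in[N]$ and $\sigma=(\sigma_1,\dots,\sigma_N)$ with $\sigma_i\le n_i$. Assume each $\vec{B}_i$ satisfies the $\sigma_i$-RIP with constant $\delta_{\sigma_i}(\vec{B}_i)$, and $\vec{A}$ satisfies the $s$-RIP with constant $\delta_s(\vec{A})$. Then $$\delta_{(s,\sigma)}(\vec{H})\le \delta_s(\vec{A})+\sup_i\delta_{\sigma_i}(\vec{B}_i)+\delta_s(\vec{A})\cdot\sup_i\delta_{\sigma_i}(\vec{B}_i).$$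
   Context: $\mathbb{K}$ is $\mathbb{R}$ or $\mathbb{C}$; $[N]=\{1,\dots,N\}$; $\otimes$ is the tensor (Kronecker) product of vectors, with $\mathbb{K}^M\otimes\mathbb{K}^m\cong\mathbb{K}^{Mm}$ carrying the Euclidean norm; $\vec{H}$ maps $\mathbb{K}^{n_1}\times\dots\times\mathbb{K}^{n_N}$ (with Euclidean norm $\|\vec{x}\|^2=\sum_i\|\vec{x}_i\|^2$) into $\mathbb{K}^{Mm}$. The $k$-RIP constant $\delta_k(\vec{C})$ of a matrix $\vec{C}$ is the smallest $\delta\ge0$ with $(1-\delta)\|\vec{x}\|^2\le\|\vec{C}\vec{x}\|^2\le(1+\delta)\|\vec{x}\|^2$ for all $k$-sparse $\vec{x}$ (at most $k$ nonzero entries). A vector $\vec{x}=(\vec{x}_1,\dots,\vec{x}_N)\in\mathbb{K}^{n_1}\times\dots\times\mathbb{K}^{n_N}$ is $(s,\sigma)$-sparse if at most $s$ blocks $\vec{x}_i$ are nonzero and each nonzero block $\vec{x}_i$ has at most $\sigma_i$ nonzero entries. The $(s,\sigma)$-HiRIP constant $\delta_{(s,\sigma)}(\vec{H})$ is the smallest $\delta\ge0$ with $(1-\delta)\|\vec{x}\|^2\le\|\vec{H}\vec{x}\|^2\le(1+\delta)\|\vec{x}\|^2$ for all $(s,\sigma)$-sparse $\vec{x}$. *)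

(* K is any numFieldType (covers K = R via a realType and
   K = C via complex R / algC). *)
From HB Require Import structures.
From mathcomp Require Import all_boot all_order all_algebra.
Set Implicit Arguments. Unset Strict Implicit. Unset Printing Implicit Defensive.
Import Order.TTheory GRing.Theory Num.Theory.
Local Open Scope ring_scope.

Section Defs.
Variable K : numFieldType.

Definition sqnorm (n : nat) (v : 'cV[K]_n) : K := \sum_(j < n) `|v j ord0| ^+ 2.

Definition bsqnorm (N : nat) (n : 'I_N -> nat) (x : forall i : 'I_N, 'cV[K]_(n i)) : K :=
  \sum_(i < N) sqnorm (x i).

Definition sparse (n k : nat) (v : 'cV[K]_n) : Prop :=
  (#|[set j : 'I_n | v j ord0 != 0%R :> K]| <= k)%N.

Definition hsparse (N : nat) (n : 'I_N -> nat) (s : nat) (sigma : 'I_N -> nat)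
  (x : forall i : 'I_N, 'cV[K]_(n i)) : Prop :=
  (#|[set i : 'I_N | x i != 0%R :> 'cV[K]_(n i)]| <= s)%N /\
  (forall i : 'I_N, x i != 0%R -> sparse (sigma i) (x i)).

(* Kronecker product of column vectors a in K^M, b in K^m, as a vector in K^(M*m)
   (lexicographic index (k,l) |-> entry a_k b_l). *)
Definition kron (M m : nat) (a : 'cV[K]_M) (b : 'cV[K]_m) : 'cV[K]_(M * m) :=
  (mxvec (a *m b^T))^T.

Definition least_const (P : K -> Prop) (d : K) : Prop :=
  0 <= d /\ P d /\ (forall d', 0 <= d' -> P d' -> d <= d').

Definition rip_ok (p q : nat) (C : 'M[K]_(p, q)) (k : nat) (d : K) : Prop :=
  forall x : 'cV[K]_q, sparse k x ->
    (1 - d) * sqnorm x <= sqnorm (C *m x) /\ sqnorm (C *m x) <= (1 + d) * sqnorm x.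

Definition rip_const (p q : nat) (C : 'M[K]_(p, q)) (k : nat) (d : K) : Prop :=
  least_const (rip_ok C k) d.

Definition hirip_ok (N : nat) (n : 'I_N -> nat) (p : nat)
  (H : (forall i : 'I_N, 'cV[K]_(n i)) -> 'cV[K]_p)
  (s : nat) (sigma : 'I_N -> nat) (d : K) : Prop :=
  forall x, hsparse s sigma x ->
    (1 - d) * bsqnorm x <= sqnorm (H x) /\ sqnorm (H x) <= (1 + d) * bsqnorm x.

Definition hirip_const (N : nat) (n : 'I_N -> nat) (p : nat)
  (H : (forall i : 'I_N, 'cV[K]_(n i)) -> 'cV[K]_p)
  (s : nat) (sigma : 'I_N -> nat) (d : K) : Prop :=
  least_const (hirip_ok H s sigma) d.

Definition Hop (N M m : nat) (n : 'I_N -> nat) (A : 'M[K]_(M, N))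
  (B : forall i : 'I_N, 'M[K]_(m, n i)) (x : forall i : 'I_N, 'cV[K]_(n i))
  : 'cV[K]_(M * m) :=
  \sum_(i < N) kron (col i A) (B i *m x i).

End Defs.

(* Write y_i = B_i x_i and, for every inner index l, let c_l in K^N be the
   "slice" (y_1(l), ..., y_N(l)).  Regrouping the entries of
   H x = sum_i a_i (x) y_i by the inner index gives
       ||H x||^2 = sum_l ||A c_l||^2     and     sum_i ||y_i||^2 = sum_l ||c_l||^2.
   If x is (s,sigma)-sparse, every slice c_l is s-sparse, so the s-RIP of A
   bounds ||H x||^2 between (1 -+ delta_A) sum_i ||y_i||^2, while the
   sigma_i-RIP of each B_i (with the common constant D = max_i delta_i)
   bounds sum_i ||y_i||^2 between (1 -+ D) ||x||^2.  Composing two such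
   two-sided bounds yields the constant delta_A + D + delta_A D, which is
   therefore admissible; minimality of delta_(s,sigma)(H) concludes. *)
From HB Require Import structures.
From mathcomp Require Import all_boot all_order all_algebra.
From mathcomp Require Import ring.
Set Implicit Arguments. Unset Strict Implicit. Unset Printing Implicit Defensive.
Import Order.TTheory GRing.Theory Num.Theory.
Local Open Scope ring_scope.

Section SquaredNorms.
Variable K : numFieldType.

Lemma sqnorm_ge0 n (v : 'cV[K]_n) : 0 <= sqnorm v.
Proof. by apply: sumr_ge0 => j _; rewrite exprn_ge0 ?normr_ge0. Qed.

Lemma sqnorm0 n : sqnorm (0 : 'cV[K]_n) = 0.
Proof. by apply: big1 => j _; rewrite mxE normr0 expr0n. Qed.

Lemma bsqnorm_ge0 N (n : 'I_N -> nat) (x : forall i : 'I_N, 'cV[K]_(n i)) :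
  0 <= bsqnorm x.
Proof. by apply: sumr_ge0 => i _; apply: sqnorm_ge0. Qed.

End SquaredNorms.

Section MaxOfNonnegatives.
Variable K : numFieldType.

(* In a numFieldType the order is only partial, so the facts below about
   Num.max need the arguments to be nonnegative (hence comparable). *)
Lemma max_ge_left (a b : K) : a <= Num.max a b.
Proof. by rewrite /Order.max; case: ifP => // /ltW. Qed.

Lemma max_ge_right {a b : K} : 0 <= a -> 0 <= b -> b <= Num.max a b.
Proof.
move=> a0 b0; rewrite /Order.max; case: ifP => // nlt_ab.
by have [//|lt_ab] := real_leP (ger0_real b0) (ger0_real a0); rewrite lt_ab in nlt_ab.
Qed.

Lemma bigmax_ge0 {I : Type} {r : seq I} {F : I -> K} :
  (forall j, 0 <= F j) -> 0 <= \big[Num.max/0]_(j <- r) F j.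
Proof.
move=> F0; apply: (big_ind (fun y => 0 <= y)) => // a b a0 b0.
exact: le_trans b0 (max_ge_right a0 b0).
Qed.

Lemma bigmax_ge (I : eqType) (r : seq I) (F : I -> K) i :
  (forall j, 0 <= F j) -> i \in r -> F i <= \big[Num.max/0]_(j <- r) F j.
Proof.
move=> F0; elim: r => [//|j r IH]; rewrite inE big_cons => /orP[/eqP-> | ir].
  exact: max_ge_left.
exact: le_trans (IH ir) (max_ge_right (F0 j) (bigmax_ge0 F0)).
Qed.

End MaxOfNonnegatives.

Section Slices.
Variables (K : numFieldType) (N M m : nat).
Implicit Type y : 'I_N -> 'cV[K]_m.

Definition slice y (l : 'I_m) : 'cV[K]_N := \col_(i < N) y i l ord0.

Lemma sqnorm_sum_kron (A : 'M[K]_(M, N)) y :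
  sqnorm (\sum_(i < N) kron (col i A) (y i)) = \sum_(l < m) sqnorm (A *m slice y l).
Proof.
rewrite /sqnorm [RHS]exchange_big (reindex _ (curry_mxvec_bij _ _)) /= pair_bigA.
apply: eq_bigr => [[k l]] _ /=; congr (`| _ | ^+ 2).
rewrite summxE mxE; apply: eq_bigr => i _.
by rewrite /kron mxE mxvecE mxE big_ord1 !mxE.
Qed.

Lemma sum_sqnorm_slices y :
  \sum_(i < N) sqnorm (y i) = \sum_(l < m) sqnorm (slice y l).
Proof.
rewrite /sqnorm exchange_big; apply: eq_bigr => i _.
by apply: eq_bigr => l _; rewrite mxE.
Qed.

(* A slice is supported on the blocks where the family is nonzero. *)
Lemma slice_sparse y (s : nat) (l : 'I_m) :
  (#|[set i : 'I_N | y i != 0%R]| <= s)%N -> sparse s (slice y l).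
Proof.
move=> supp_y; apply: leq_trans supp_y; apply: subset_leq_card.
apply/subsetP => i; rewrite !inE mxE; apply: contraNN => /eqP->.
by rewrite mxE.
Qed.

End Slices.

Section RipBounds.
Variable K : numFieldType.

Definition rip_bounds (d p q : K) : Prop := (1 - d) * p <= q /\ q <= (1 + d) * p.

Lemma rip_bounds_sum (I : Type) (r : seq I) (d : K) (p q : I -> K) :
  (forall l, rip_bounds d (p l) (q l)) ->
  rip_bounds d (\sum_(l <- r) p l) (\sum_(l <- r) q l).
Proof.
move=> pq; rewrite /rip_bounds !mulr_sumr.
by split; apply: ler_sum => l _; case: (pq l).
Qed.

Lemma rip_bounds_weaken (d d' p q : K) :
  0 <= p -> d <= d' -> rip_bounds d p q -> rip_bounds d' p q.
Proof.
move=> p0 le_dd' [lo up]; split.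
  by apply: le_trans lo; rewrite ler_wpM2r // lerD2l lerN2.
by apply: le_trans up _; rewrite ler_wpM2r // lerD2l.
Qed.

(* Composing estimates: constants a and b combine into a + b + ab, since
   (1 + a)(1 + b) = 1 + (a + b + ab) and (1 - a)(1 - b) >= 1 - (a + b + ab).
   The lower bound multiplies by 1 - a, so it needs a <= 1; for a > 1 the
   lower bound is negative and holds trivially. *)
Lemma rip_bounds_compose (a b x y z : K) :
  0 <= a -> 0 <= b -> 0 <= x -> 0 <= z ->
  rip_bounds b x y -> rip_bounds a y z -> rip_bounds (a + b + a * b) x z.
Proof.
move=> a0 b0 x0 z0 [lo_y up_y] [lo_z up_z]; split; last first.
  have -> : (1 + (a + b + a * b)) * x = (1 + a) * ((1 + b) * x) by ring.
  by apply: le_trans up_z _; rewrite ler_wpM2l // addr_ge0.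
have [a_le1 | a_gt1] := real_leP (ger0_real a0) (@real1 K).
  have a'0 : 0 <= 1 - a by rewrite subr_ge0.
  apply: le_trans lo_z; apply: le_trans (ler_wpM2l a'0 lo_y).
  rewrite mulrA ler_wpM2r // -subr_ge0.
  have -> : (1 - a) * (1 - b) - (1 - (a + b + a * b)) = (a * b) *+ 2 by ring.
  by rewrite mulrn_wge0 // mulr_ge0.
apply: le_trans z0; rewrite mulr_le0_ge0 // subr_le0 -addrA ler_wpDr ?(ltW a_gt1) //.
by rewrite addr_ge0 ?mulr_ge0.
Qed.

Lemma rip_ok_blocks N (n : 'I_N -> nat) m (B : forall i : 'I_N, 'M[K]_(m, n i))
    (sigma : 'I_N -> nat) (d : 'I_N -> K) (s : nat) x :
  (forall i, rip_ok (B i) (sigma i) (d i)) -> hsparse s sigma x ->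
  forall i, rip_bounds (d i) (sqnorm (x i)) (sqnorm (B i *m x i)).
Proof.
move=> okB [_ sp_x] i; have [-> | nz] := eqVneq (x i) 0.
  by rewrite mulmx0 !sqnorm0 /rip_bounds !mulr0 lexx.
exact: okB _ _ (sp_x i nz).
Qed.

End RipBounds.

Theorem theorem1 (K : numFieldType) (N M m : nat) (n : 'I_N -> nat)
  (A : 'M[K]_(M, N)) (B : forall i : 'I_N, 'M[K]_(m, n i))
  (s : nat) (sigma : 'I_N -> nat)
  (dA : K) (dB : 'I_N -> K) (dH : K) :
  (1 <= s <= N)%N ->
  (forall i : 'I_N, (sigma i <= n i)%N) ->
  rip_const A s dA ->
  (forall i : 'I_N, rip_const (B i) (sigma i) (dB i)) ->
  hirip_const (Hop A B) s sigma dH ->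
  dH <= dA + \big[Num.max/0]_(i < N) dB i
        + dA * \big[Num.max/0]_(i < N) dB i.
Proof.
move=> _ _ [dA0 [okA _]] ripB [_ [_ minH]].
set D := \big[Num.max/0]_(i < N) dB i.
have dB0 i : 0 <= dB i by case: (ripB i).
have D0 : 0 <= D by apply: bigmax_ge0.
apply: minH; first by rewrite !addr_ge0 ?mulr_ge0.
move=> x x_sp; set y := fun i => B i *m x i.
have blocks : rip_bounds D (bsqnorm x) (\sum_(i < N) sqnorm (y i)).
  apply: rip_bounds_sum => i; apply: rip_bounds_weaken (sqnorm_ge0 _) _ _.
    exact: bigmax_ge (mem_index_enum i).
  by apply: rip_ok_blocks x_sp i => j; case: (ripB j) => _ [].
have slices : rip_bounds dA (\sum_(i < N) sqnorm (y i)) (sqnorm (Hop A B x)).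
  rewrite sum_sqnorm_slices /Hop (sqnorm_sum_kron A y).
  apply: rip_bounds_sum => l; apply: okA; apply: slice_sparse.
  apply: leq_trans x_sp.1; apply: subset_leq_card; apply/subsetP => i.
  by rewrite !inE; apply: contraNN => /eqP; rewrite /y => ->; rewrite mulmx0.
exact: rip_bounds_compose dA0 D0 (bsqnorm_ge0 x) (sqnorm_ge0 _) blocks slices.
Qed.
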